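(* A permutation $\pi\in\mathcal{S}_n$ is a Schröder permutation (i.e. avoids both $1243$ and $2143$) if and only if every element $(i,j)$ of its essential set $\mathcal{E}(\pi)$ has rank $\rho(i,j)\le 1$.
   Context: For $\pi=\pi_1\cdots\pi_n\in\mathcal{S}_n$ and $\tau\in\mathcal{S}_k$, $\pi$ contains the pattern $\tau$ if there are indices $i_1<\dots<i_k$ with $\pi_{i_1}\cdots\pi_{i_k}$ in the same relative order as $\tau_1\cdots\tau_k$; otherwise $\pi$ avoids $\tau$. Represent $\pi$ by an $n\times n$ array, rows $i=1,\dots,n$ numbered top to bottom and columns $j=1,\dots,n$ left to right, with a dot in square $(i,\pi_i)$. The diagram $D(\pi)$ is the set of squares $(i,j)$ with $\pi_i>j$ and $\pi^{-1}(j)>i$. The essential set $\mathcal{E}(\pi)$ is the set of squares $(i,j)\in D(\pi)$ such that $(i+1,j)\notin D(\pi)$ and $(i,j+1)\notin D(\pi)$ (squares outside the array count as not in $D(\pi)$). The rank of a square $(i,j)$ is $\rho(i,j)=\#\{k<i:\pi_k<j\}$, the number of dots strictly northwest of it. *)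

(* Permutations of 'I_n (0-based rows/columns/values;
   all notions are invariant under the uniform shift by 1). *)
From mathcomp Require Import all_boot all_fingroup.
Set Implicit Arguments. Unset Strict Implicit. Unset Printing Implicit Defensive.

Section Perm.
Variable n : nat.
Implicit Types pi : 'S_n.

(* pi contains the pattern tau (given in one-line notation as a sequence of
   distinct numbers, e.g. [:: 1; 2; 4; 3]): there are indices
   i_1 < ... < i_k with pi_{i_1} ... pi_{i_k} in the same relative order. *)
Definition contains_pattern pi (tau : seq nat) : Prop :=
  exists f : 'I_(size tau) -> 'I_n,
    (forall a b : 'I_(size tau), a < b -> f a < f b) /\
    (forall a b : 'I_(size tau),
        (pi (f a) < pi (f b)) = (nth 0 tau a < nth 0 tau b)).

Definition avoids_pattern pi (tau : seq nat) : Prop := ~ contains_pattern pi tau.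

Definition schroeder pi : Prop :=
  avoids_pattern pi [:: 1; 2; 4; 3] /\ avoids_pattern pi [:: 2; 1; 4; 3].

(* (i,j) in the diagram D(pi): pi_i > j and pi^{-1}(j) > i; squares outside
   the array (i or j >= n) are not in D(pi). *)
Definition in_diagram pi (i j : nat) : bool :=
  [exists a : 'I_n, [exists b : 'I_n,
     [&& (a == i :> nat), (b == j :> nat), (b < pi a) & (a < (pi^-1)%g b)]]].

Definition essential pi (i j : 'I_n) : bool :=
  [&& in_diagram pi i j, ~~ in_diagram pi i.+1 j & ~~ in_diagram pi i j.+1].

Definition rank_sq pi (i j : 'I_n) : nat :=
  #|[set k : 'I_n | (k < i) && (pi k < j)]|.

End Perm.

(** If a square (i, j) of the diagram has two dots k1 < k2 to its northwest,
    then together with the dot in row i (east of column j) and the dot in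
    column j (south of row i) they form a 1243 or a 2143.  Conversely, such a
    pattern at rows a < b < c < d puts the square (c, pi d) in the diagram with
    the dots of rows a and b to its northwest, and walking south-east inside
    the diagram from any square reaches an essential square, whose rank can
    only be larger. *)
From mathcomp Require Import all_boot all_fingroup.
From mathcomp Require Import zify.

Set Implicit Arguments.
Unset Strict Implicit.
Unset Printing Implicit Defensive.

Section Diagram.
Variables (n : nat) (pi : 'S_n).

Lemma in_diagramE (i j : 'I_n) :
  in_diagram pi i j = (j < pi i) && (i < (pi^-1)%g j).
Proof.
apply/existsP/andP => [[a /existsP [b /and4P [/eqP ha /eqP hb]]]|[ji ij]].
  by rewrite (val_inj ha) (val_inj hb).
by exists i; apply/existsP; exists j; rewrite !eqxx ji ij.
Qed.

Lemma leq_rank_sq (c d i j : 'I_n) :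
  c <= i -> d <= j -> rank_sq pi c d <= rank_sq pi i j.
Proof.
move=> ci dj; apply/subset_leq_card/subsetP => k; rewrite !inE.
by case/andP=> kc pkd; apply/andP; split; lia.
Qed.

(* An (i + j)-maximal diagram square south-east of (c, d) is essential. *)
Lemma in_diagram_essential (c d : 'I_n) : in_diagram pi c d ->
  exists i j : 'I_n, [&& essential pi i j, c <= i & d <= j].
Proof.
move=> Dcd.
pose P (p : 'I_n * 'I_n) := [&& in_diagram pi p.1 p.2, c <= p.1 & d <= p.2].
have Pcd : P (c, d) by rewrite /P Dcd !leqnn.
case: (arg_maxnP (fun p : 'I_n * 'I_n => p.1 + p.2) Pcd).
move=> [i j] /and3P [/= Dij ci dj] maxij.
exists i, j; rewrite /essential Dij ci dj !andbT /=.
apply/andP; split; apply/negP.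
  move=> /existsP [a /existsP [b /and4P [/eqP ai /eqP bj ja ab]]].
  rewrite (val_inj bj) in ja ab.
  by have := maxij (a, j); rewrite /P /= in_diagramE ja ab; lia.
move=> /existsP [a /existsP [b /and4P [/eqP ai /eqP bj ba ab]]].
rewrite (val_inj ai) in ba ab.
by have := maxij (i, b); rewrite /P /= in_diagramE ba ab; lia.
Qed.

Lemma pattern_1243_or_2143 (k1 k2 i r : 'I_n) :
  k1 < k2 -> k2 < i -> i < r ->
  pi k1 < pi r -> pi k2 < pi r -> pi r < pi i ->
  contains_pattern pi [:: 1; 2; 4; 3] \/ contains_pattern pi [:: 2; 1; 4; 3].
Proof.
move=> k12 k2i ir k1r k2r ri.
pose f (x : 'I_4) := nth k1 [:: k1; k2; i; r] x.
case: (ltngtP (pi k1) (pi k2)) => [k12'|k21'|/val_inj/perm_inj k12E].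
- left; exists f; rewrite /f; split;
    by move=> [[|[|[|[|?]]]] ?] [[|[|[|[|?]]]] ?] //=; lia.
- right; exists f; rewrite /f; split;
    by move=> [[|[|[|[|?]]]] ?] [[|[|[|[|?]]]] ?] //=; lia.
- by rewrite k12E ltnn in k12.
Qed.

Lemma pattern_x_43_diagram_rank_gt1 (t0 t1 t2 t3 : nat) :
  t0 < t3 -> t1 < t3 -> t3 < t2 -> contains_pattern pi [:: t0; t1; t2; t3] ->
  exists i j : 'I_n, in_diagram pi i j && (1 < rank_sq pi i j).
Proof.
move=> t03 t13 t32 [f [f_incr f_order]].
pose a := f (@Ordinal 4 0 isT); pose b := f (@Ordinal 4 1 isT).
pose c := f (@Ordinal 4 2 isT); pose d := f (@Ordinal 4 3 isT).
have ab : a < b by apply: f_incr.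
have bc : b < c by apply: f_incr.
have cd : c < d by apply: f_incr.
have ad : pi a < pi d by rewrite f_order.
have bd : pi b < pi d by rewrite f_order.
have dc : pi d < pi c by rewrite f_order.
exists c, (pi d); rewrite in_diagramE permK dc cd /=.
apply/card_gt1P; exists a, b; rewrite !inE ad bd !andbT; split; try lia.
by apply/negP => /eqP abE; rewrite abE ltnn in ab.
Qed.

Lemma diagram_rank_gt1_patterns :
  (exists i j : 'I_n, in_diagram pi i j && (1 < rank_sq pi i j)) <->
  contains_pattern pi [:: 1; 2; 4; 3] \/ contains_pattern pi [:: 2; 1; 4; 3].
Proof.
split; last by case; apply: pattern_x_43_diagram_rank_gt1.
move=> [i [j /andP []]]; rewrite in_diagramE => /andP [ji ir].
case/card_gt1P=> x [y []]; rewrite !inE => /andP [xi xj] /andP [yi yj] xy.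
have pir : pi ((pi^-1)%g j) = j by rewrite permKV.
case: (ltngtP x y) => [x_y|y_x|/val_inj xyE]; last by rewrite xyE eqxx in xy.
  by move: (pattern_1243_or_2143 x_y yi ir); rewrite pir; apply.
by move: (pattern_1243_or_2143 y_x xi ir); rewrite pir; apply.
Qed.

Lemma essential_rank_gt1 :
  (exists i j : 'I_n, essential pi i j && (1 < rank_sq pi i j)) <->
  (exists i j : 'I_n, in_diagram pi i j && (1 < rank_sq pi i j)).
Proof.
split=> [[i [j /andP [/and3P [Dij _ _] rk]]]|[c [d /andP [Dcd rk]]]].
  by exists i, j; rewrite Dij rk.
have [i [j /and3P [Eij ci dj]]] := in_diagram_essential Dcd.
by exists i, j; rewrite Eij (leq_trans rk (leq_rank_sq ci dj)).
Qed.

End Diagram.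

Theorem theorem2p1 (n : nat) (pi : 'S_n) :
  schroeder pi <-> (forall i j : 'I_n, essential pi i j -> rank_sq pi i j <= 1).
Proof.
split=> [[no1243 no2143] i j Eij|small_rank].
  rewrite leqNgt; apply/negP => rk.
  have : exists i j : 'I_n, essential pi i j && (1 < rank_sq pi i j).
    by exists i, j; rewrite Eij rk.
  by case/essential_rank_gt1/diagram_rank_gt1_patterns.
have no_large_rank : ~ exists i j : 'I_n, essential pi i j && (1 < rank_sq pi i j).
  by move=> [i [j /andP [Eij]]]; rewrite ltnNge small_rank.
split=> C; apply: no_large_rank.
  by apply/essential_rank_gt1/diagram_rank_gt1_patterns; left.
by apply/essential_rank_gt1/diagram_rank_gt1_patterns; right.
Qed.
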